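(* Let $G$ be a finite abelian group of order $N$. Then for every integer $m$ with $1 \leq m \leq N/2$, \[\rho_\pm(G, m, 2) \geq \min\{\rho_G^-(m),\ \rho_G^-(2m) - 1\}.\]
   Context: For subsets $A, B$ of a finite abelian group $(G,+)$ of order $N$, write $A - B = \{a - b \mid a \in A, b \in B\}$, and for $1 \le r \le N$ let $\rho^-_G(r) = \min \{|A - A| \mid A \subseteq G, |A| = r\}$. For a subset $A = \{a_1, \ldots, a_m\} \subseteq G$ of $m$ distinct elements, the signed sumset $2_\pm A$ is $\{\lambda_1 a_1 + \cdots + \lambda_m a_m \mid \lambda_i \in \mathbb{Z},\ \sum_{i=1}^m |\lambda_i| = 2\}$; equivalently it consists of the elements $\pm 2a$ for $a \in A$ and $\pm a \pm b$ for distinct $a, b \in A$. For $1 \le m \le N$, $\rho_\pm(G, m, 2) = \min\{|2_\pm A| \mid A \subseteq G, |A| = m\}$. *)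

From mathcomp Require Import all_boot all_order all_algebra.
Set Implicit Arguments. Unset Strict Implicit. Unset Printing Implicit Defensive.
Import GRing.Theory.
Local Open Scope ring_scope.

Definition diffset (G : finZmodType) (A : {set G}) : {set G} :=
  [set a - b | a in A, b in A].

(* rho^-_G(r) = min { |A - A| : A subset of G, |A| = r }.
   (For r > |G| the min ranges over the empty family and defaults to |G|;
   only 1 <= r <= |G| is used.) *)
Definition rho_minus (G : finZmodType) (r : nat) : nat :=
  \big[minn/#|G|]_(A : {set G} | #|A| == r) #|diffset A|.

Definition signed_sumset2 (G : finZmodType) (A : {set G}) : {set G} :=
  [set x | [exists a in A, (x == a + a) || (x == - (a + a))]
        || [exists a in A, exists b in A,
              (a != b) && [|| x == a + b, x == a - b, x == - a + b | x == - a - b]]].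

Definition rho_pm2 (G : finZmodType) (m : nat) : nat :=
  \big[minn/#|G|]_(A : {set G} | #|A| == m) #|signed_sumset2 A|.

(* If [0] lies in [2_± A], then [A - A] is contained in [2_± A], since its
   nonzero elements are the [a - b] with [a != b].  Otherwise no [a, b] in [A]
   satisfy [a + b = 0], so [A] and [-A] are disjoint and [B = A ∪ -A] has [2m]
   elements; every element of [B - B] is [0] or of the form [±a ± b], so
   [|B - B| <= 1 + |2_± A|]. *)

From mathcomp Require Import all_boot all_order all_algebra.
Set Implicit Arguments. Unset Strict Implicit. Unset Printing Implicit Defensive.
Import Order.TTheory GRing.Theory.
Local Open Scope ring_scope.

Section ExtremalFunctions.
Variable G : finZmodType.

Lemma rho_minus_le_diffset (A : {set G}) : (rho_minus G #|A| <= #|diffset A|)%N.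
Proof.
rewrite /rho_minus -minEnat -leEnat.
exact: (bigmin_le_cond _ (P := fun B : {set G} => #|B| == #|A|)).
Qed.

Lemma rho_minus_le_card r : (rho_minus G r <= #|G|)%N.
Proof. by rewrite /rho_minus -minEnat -leEnat; exact: bigmin_le_id. Qed.

Lemma rho_pm2_ge m k :
  (k <= #|G|)%N -> (forall A : {set G}, #|A| = m -> k <= #|signed_sumset2 A|)%N ->
  (k <= rho_pm2 G m)%N.
Proof.
move=> k_le_G k_le_A; rewrite /rho_pm2 -minEnat -leEnat.
by apply: le_bigmin => // A /eqP; exact: k_le_A.
Qed.

End ExtremalFunctions.

Section SignedSumset.
Variables (G : finZmodType) (A : {set G}).

Lemma mem_signed_sumset2_double a : a \in A -> a + a \in signed_sumset2 A.
Proof.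
by move=> aA; rewrite inE; apply/orP; left; apply/existsP; exists a; rewrite aA eqxx.
Qed.

Lemma mem_signed_sumset2_oppdouble a : a \in A -> - (a + a) \in signed_sumset2 A.
Proof.
move=> aA; rewrite inE; apply/orP; left; apply/existsP; exists a.
by rewrite aA eqxx orbT.
Qed.

Lemma mem_signed_sumset2_distinct a b x :
  a \in A -> b \in A -> a != b ->
  [|| x == a + b, x == a - b, x == - a + b | x == - a - b] ->
  x \in signed_sumset2 A.
Proof.
move=> aA bA ab hx; rewrite inE; apply/orP; right.
by apply/existsP; exists a; rewrite aA /=; apply/existsP; exists b; rewrite bA ab.
Qed.

Lemma mem_setU0_signed_sumset2 a b x :
  a \in A -> b \in A ->
  [|| x == a + b, x == a - b, x == - a + b | x == - a - b] ->
  x \in 0 |: signed_sumset2 A.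
Proof.
move=> aA bA; have [<-|ab] := eqVneq a b; last first.
  by move=> hx; rewrite setU1r // (mem_signed_sumset2_distinct aA bA ab).
case/or4P => /eqP ->.
- by rewrite setU1r // mem_signed_sumset2_double.
- by rewrite subrr setU11.
- by rewrite addNr setU11.
- by rewrite -opprD setU1r // mem_signed_sumset2_oppdouble.
Qed.

Lemma diffset_sub_signed_sumset2 : diffset A \subset 0 |: signed_sumset2 A.
Proof.
apply/subsetP => _ /imset2P [a b aA bA ->].
by apply: (mem_setU0_signed_sumset2 aA bA); rewrite eqxx orbT.
Qed.

Lemma diffset_symmetrization_sub :
  diffset (A :|: -%R @: A) \subset 0 |: signed_sumset2 A.
Proof.
apply/subsetP => _ /imset2P [u v /setUP [uA|/imsetP [a aA ->]]
                                 /setUP [vA|/imsetP [b bA ->]] ->].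
- by apply: (mem_setU0_signed_sumset2 uA vA); rewrite eqxx orbT.
- by apply: (mem_setU0_signed_sumset2 uA bA); rewrite opprK eqxx.
- by apply: (mem_setU0_signed_sumset2 aA vA); rewrite eqxx !orbT.
- by apply: (mem_setU0_signed_sumset2 aA bA); rewrite opprK eqxx !orbT.
Qed.

Lemma disjoint_oppset_of_notin_signed_sumset2 :
  0 \notin signed_sumset2 A -> [disjoint A & -%R @: A].
Proof.
move=> S0; apply/pred0P => x /=; apply/negbTE/andP => -[xA /imsetP [a aA xNa]].
have xa0 : x + a = 0 by rewrite xNa addNr.
have [xa|xa] := eqVneq x a.
  by move: S0; rewrite -xa0 xa mem_signed_sumset2_double.
by move: S0; rewrite (mem_signed_sumset2_distinct xA aA xa) // xa0 eqxx.
Qed.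

Lemma card_symmetrization :
  [disjoint A & -%R @: A] -> #|A :|: -%R @: A| = (#|A|.*2)%N.
Proof.
move=> dis; rewrite cardsU (disjoint_setI0 dis) cards0 subn0.
by rewrite card_imset ?addnn //; exact: oppr_inj.
Qed.

Lemma card_signed_sumset2_ge :
  (minn (rho_minus G #|A|) (rho_minus G #|A|.*2).-1 <= #|signed_sumset2 A|)%N.
Proof.
rewrite geq_min; have [S0|S0] := boolP (0 \in signed_sumset2 A).
  apply/orP; left; apply: leq_trans (rho_minus_le_diffset A) _.
  apply: leq_trans (subset_leq_card diffset_sub_signed_sumset2) _.
  by rewrite cardsU1 S0.
apply/orP; right.
have := rho_minus_le_diffset (A :|: -%R @: A).
rewrite card_symmetrization ?disjoint_oppset_of_notin_signed_sumset2 //.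
move/leq_trans/(_ (subset_leq_card diffset_symmetrization_sub)).
by rewrite cardsU1 S0 -subn1 leq_subLR.
Qed.

End SignedSumset.

Theorem mainTheorem9 (G : finZmodType) (m : nat) :
  (1 <= m)%N -> (m.*2 <= #|G|)%N ->
  (minn (rho_minus G m) (rho_minus G m.*2).-1 <= rho_pm2 G m)%N.
Proof.
(* The bound holds for every [m]. *)
move=> _ _; apply: rho_pm2_ge => [|A <-]; last exact: card_signed_sumset2_ge.
by rewrite geq_min rho_minus_le_card.
Qed.
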